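(* For generic $a$ ($a\neq1$) and $k$, each of the following three pairs is a WP-Bailey pair relative to $a$ with parameter $k$ (all formulas valid for $n\ge0$): (i) $\boldsymbol{\alpha}_n=\dfrac{(-1)^nq^{n(n-1)/2}(1-aq^{2n})(a;q)_n}{(1-a)(q;q)_n}$, $\boldsymbol{\beta}_n=\dfrac{(-1)^nk^nq^{n(n-1)/2}(k;q)_n}{a^n(q;q)_n}$; (ii) $\boldsymbol{\alpha}_n=\dfrac{(-1)^na^{-n}(1-aq^{2n})(a^2;q^2)_n}{(1-a)(q^2;q^2)_n}$, $\boldsymbol{\beta}_n=\dfrac{(-1)^na^{-n}(k^2;q^2)_n}{(q^2;q^2)_n}$; (iii) $\boldsymbol{\alpha}_n=\dfrac{q^{-n/2}(1-aq^{2n})(a,\sqrt{q};q)_n}{(1-a)(q,a\sqrt{q};q)_n}$, $\boldsymbol{\beta}_n=\dfrac{(k,k\sqrt{q}/a;q)_n}{(q,a\sqrt{q};q)_n}q^{-n/2}$.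
   Context: Notation: $(x;q)_n=\prod_{i=0}^{n-1}(1-xq^i)$, $(x_1,\dots,x_j;q)_n=(x_1;q)_n\cdots(x_j;q)_n$. A pair of sequences $(\boldsymbol{\alpha}_n(a,k,q),\boldsymbol{\beta}_n(a,k,q))_{n\ge0}$ is a WP-Bailey pair (relative to $a$, with parameter $k$) if $\boldsymbol{\alpha}_0=1$ and for all $n\ge0$ \[\boldsymbol{\beta}_n=\sum_{j=0}^n\frac{(k/a;q)_{n-j}(k;q)_{n+j}}{(q;q)_{n-j}(aq;q)_{n+j}}\boldsymbol{\alpha}_j.\] *)

From HB Require Import structures.
From mathcomp Require Import all_boot all_order all_algebra.
Set Implicit Arguments. Unset Strict Implicit. Unset Printing Implicit Defensive.
Import Order.TTheory GRing.Theory Num.Theory.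
Local Open Scope ring_scope.

Definition qpoch (F : fieldType) (x q : F) (n : nat) : F :=
  \prod_(i < n) (1 - x * q ^+ i).

Definition WP_Bailey_pair (F : fieldType) (a k q : F) (alpha beta : nat -> F) : Prop :=
  alpha 0%N = 1 /\
  forall n : nat,
    beta n = \sum_(j < n.+1)
      (qpoch (k / a) q (n - j) * qpoch k q (n + j)
        / (qpoch q q (n - j) * qpoch (a * q) q (n + j))) * alpha j.

From HB Require Import structures.
From mathcomp Require Import all_boot all_order all_algebra.
From mathcomp Require Import ring zify.
Import GRing.Theory.
Local Open Scope ring_scope.
Set Implicit Arguments. Unset Strict Implicit.

(* Three WP-Bailey pairs, proved by the Wilf-Zeilberger method.

   Write w(u,v) = (k/a;q)_u (k;q)_v / ((q;q)_u (aq;q)_v), so that the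
   defining sum of a WP-Bailey pair is S_n = sum_{j<=n} w(n-j,n+j) alpha_j.
   Instead of evaluating S_n we show that it satisfies the first-order
   recurrence S_{n+1} = c_n S_n obeyed by the proposed beta_n; as
   S_0 = 1 = beta_0 this gives S_n = beta_n.  The recurrence follows from a
   certificate G_n(j) = L_n w(n+1-j,n+j) g_j with g_0 = 0 for which the
   summand of S_{n+1} - c_n S_n equals G_n(j+1) - G_n(j), up to a boundary
   term: the sum telescopes. *)

Section QPochhammer.

Variables (F : fieldType) (x q : F).

Lemma qpoch0 : qpoch x q 0 = 1.
Proof. by rewrite /qpoch big_ord0. Qed.

Lemma qpochS n : qpoch x q n.+1 = qpoch x q n * (1 - x * q ^+ n).
Proof. by rewrite /qpoch big_ord_recr. Qed.

Lemma qpoch_neq0 n :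
  (forall i, (i < n)%N -> 1 - x * q ^+ i != 0) -> qpoch x q n != 0.
Proof.
elim: n => [|n IHn] nz; first by rewrite qpoch0 oner_neq0.
rewrite qpochS mulf_neq0 ?nz // IHn // => i lt_in.
exact/nz/ltnW.
Qed.

End QPochhammer.

Section Telescoping.

Variables (F : fieldType) (a k q : F).

(* The kernel of the WP-Bailey transform, with its two indices separated:
   the coefficient of alpha_j in beta_n is wp_weight (n - j) (n + j). *)
Definition wp_weight (u v : nat) : F :=
  qpoch (k / a) q u * qpoch k q v / (qpoch q q u * qpoch (a * q) q v).

(* The two identities required of a WZ certificate G_n(j) = L_n w(n+1-j,n+j) g_j
   for the recurrence S_{n+1} = c_n S_n: the summand of S_{n+1} - c_n S_n is
   G_n(j+1) - G_n(j) (stated with n = m + j to avoid truncated subtraction),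
   and the last summand of S_{n+1} is cancelled by -G_n(n+1). *)
Definition wz_step (alpha c L g : nat -> F) : Prop :=
  forall m j,
    wp_weight m.+1 (m + j + j)%N.+1 * alpha j
      - c (m + j)%N * (wp_weight m (m + j + j)%N * alpha j)
    = L (m + j)%N * (wp_weight m (m + j + j)%N.+1 * g j.+1
                       - wp_weight m.+1 (m + j + j)%N * g j).

Definition wz_boundary (alpha L g : nat -> F) : Prop :=
  forall n, L n * (wp_weight 0 (n + n)%N.+1 * g n.+1)
            = - (wp_weight 0 (n + n)%N.+2 * alpha n.+1).

Lemma wp_pair_of_certificate (alpha beta c L g : nat -> F) :
  alpha 0%N = 1 -> beta 0%N = 1 ->
  (forall n, beta n.+1 = c n * beta n) ->
  g 0%N = 0 -> wz_step alpha c L g -> wz_boundary alpha L g ->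
  WP_Bailey_pair a k q alpha beta.
Proof.
move=> alpha0 beta0 betaS g0 step boundary; split=> // n.
rewrite -[RHS]/(\sum_(j < n.+1) wp_weight (n - j)%N (n + j)%N * alpha j).
elim: n => [|n IHn].
  by rewrite big_ord1 /wp_weight !qpoch0 alpha0 beta0 !mulr1 invr1 mulr1.
pose G j := L n * (wp_weight (n.+1 - j)%N (n + j)%N * g j).
have telescope :
    \sum_(j < n.+1) (wp_weight (n.+1 - j)%N (n.+1 + j)%N * alpha j
                     - c n * (wp_weight (n - j)%N (n + j)%N * alpha j))
    = G n.+1 - G 0%N.
  rewrite -(big_mkord xpredT (fun j => wp_weight (n.+1 - j)%N (n.+1 + j)%N * alpha j
                     - c n * (wp_weight (n - j)%N (n + j)%N * alpha j))).
  apply: telescope_sumr_eq => // j /andP[_ le_jn].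
  rewrite subSn // addSn /G subSS addnS subSn // -mulrBr.
  by have := step (n - j)%N j; rewrite !subnK.
move: telescope; rewrite sumrB -mulr_sumr /G subnn g0 !mulr0 subr0.
rewrite addnS boundary => telescope.
rewrite betaS IHn [RHS]big_ord_recr /= subnn addSn addnS.
by apply/esym/eqP; rewrite -subr_eq0 addrAC telescope addNr.
Qed.

End Telescoping.

Lemma triangular_succ j : ((j.+1 * (j.+1 - 1))./2 = (j * (j - 1))./2 + j)%N.
Proof. by rewrite !subn1 -!bin2 binS bin1. Qed.

(* Splits q^(2j) so that [field] sees it as a product of the atom q^j. *)
Lemma expr_double (F : fieldType) (x : F) j : x ^+ (2 * j) = x ^+ j * x ^+ j.
Proof. by rewrite mulnC exprM expr2 -exprMn. Qed.

Section ThreePairs.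

Variables (F : fieldType) (a k q : F).
Hypotheses (a_neq0 : a != 0) (a_neq1 : a != 1)
  (q_generic : forall n : nat, q ^+ n.+1 != 1)
  (aq_generic : forall n : nat, a * q ^+ n.+1 != 1).

Lemma one_sub_a_neq0 : 1 - a != 0.
Proof. by rewrite subr_eq0 eq_sym. Qed.

Lemma one_sub_qpow_neq0 e : (0 < e)%N -> 1 - q ^+ e != 0.
Proof. by case: e => // e _; rewrite subr_eq0 eq_sym. Qed.

Lemma one_sub_aqpow_neq0 e : (0 < e)%N -> 1 - a * q ^+ e != 0.
Proof. by case: e => // e _; rewrite subr_eq0 eq_sym. Qed.

Lemma qpoch_qq_neq0 n : qpoch q q n != 0.
Proof. by apply: qpoch_neq0 => i _; rewrite -exprS one_sub_qpow_neq0. Qed.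

Lemma qpoch_q2q2_neq0 n : qpoch (q ^+ 2) (q ^+ 2) n != 0.
Proof. by apply: qpoch_neq0 => i _; rewrite -exprM -exprD one_sub_qpow_neq0. Qed.

Lemma qpoch_aqq_neq0 n : qpoch (a * q) q n != 0.
Proof. by apply: qpoch_neq0 => i _; rewrite -mulrA -exprS one_sub_aqpow_neq0. Qed.

Ltac nonzero_with extra :=
  repeat (apply/andP; split);
  rewrite -?mulrA; repeat rewrite -?exprD -?exprS -?expr2;
  first [ extra
        | exact: oner_neq0 | exact: a_neq0 | exact: (expf_neq0 _ a_neq0)
        | exact: one_sub_a_neq0 | exact: qpoch_qq_neq0 | exact: qpoch_q2q2_neq0
        | exact: qpoch_aqq_neq0
        | (apply: one_sub_qpow_neq0; lia) | (apply: one_sub_aqpow_neq0; lia) ].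

Ltac nonzero := nonzero_with fail.

(* In all three pairs the certificate factor g_j is alpha_j with
   the very-well-poised factor 1 - a q^(2j) replaced by a factor vanishing at
   j = 0, and L_n contains the factor 1 - k q^(2n+1); ratio_* is the
   quotient beta_(n+1) / beta_n. *)
Definition alpha_i n := (-1) ^+ n * q ^+ ((n * (n - 1))./2) * (1 - a * q ^+ (2 * n))
  * qpoch a q n / ((1 - a) * qpoch q q n).
Definition beta_i n := (-1) ^+ n * k ^+ n * q ^+ ((n * (n - 1))./2) * qpoch k q n
  / (a ^+ n * qpoch q q n).
Definition ratio_i n := - (k * q ^+ n * (1 - k * q ^+ n)) / (a * (1 - q ^+ n.+1)).
Definition certL_i n := - (1 - k * q ^+ (n + n).+1) / (1 - q ^+ n.+1).
Definition certg_i j := (-1) ^+ j * q ^+ ((j * (j - 1))./2) * qpoch a q j * (1 - q ^+ j)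
  / ((1 - a) * qpoch q q j).

Lemma wz_step_i : wz_step a k q alpha_i ratio_i certL_i certg_i.
Proof.
move=> m j; rewrite /wp_weight /alpha_i /ratio_i /certL_i /certg_i.
rewrite triangular_succ !qpochS !expr_double !exprS !exprD.
by field; nonzero.
Qed.

Lemma wz_boundary_i : wz_boundary a k q alpha_i certL_i certg_i.
Proof.
move=> n; rewrite /wp_weight /alpha_i /certL_i /certg_i.
rewrite triangular_succ !qpoch0 !qpochS !expr_double !exprS !exprD.
by field; nonzero.
Qed.

Lemma wp_pair_i : WP_Bailey_pair a k q alpha_i beta_i.
Proof.
apply: (wp_pair_of_certificate (c := ratio_i) (L := certL_i) (g := certg_i)).
- by rewrite /alpha_i !qpoch0 /= !expr0; field; nonzero.
- by rewrite /beta_i !qpoch0 /= !expr0; field; nonzero.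
- move=> n; rewrite /beta_i /ratio_i triangular_succ !qpochS !exprS !exprD.
  by field; nonzero.
- by rewrite /certg_i expr0 subrr !(mulr0, mul0r).
- exact: wz_step_i.
- exact: wz_boundary_i.
Qed.

Definition alpha_ii n := (-1) ^+ n * a ^- n * (1 - a * q ^+ (2 * n))
  * qpoch (a ^+ 2) (q ^+ 2) n / ((1 - a) * qpoch (q ^+ 2) (q ^+ 2) n).
Definition beta_ii n := (-1) ^+ n * a ^- n * qpoch (k ^+ 2) (q ^+ 2) n
  / qpoch (q ^+ 2) (q ^+ 2) n.
Definition ratio_ii n := - (1 - k ^+ 2 * (q ^+ 2) ^+ n) / (a * (1 - (q ^+ 2) ^+ n.+1)).
Definition certL_ii n := - (1 - k * q ^+ (n + n).+1) / (1 - (q ^+ 2) ^+ n.+1).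
Definition certg_ii j := (-1) ^+ j * a ^- j * qpoch (a ^+ 2) (q ^+ 2) j * (1 - (q ^+ 2) ^+ j)
  / ((1 - a) * qpoch (q ^+ 2) (q ^+ 2) j).

Lemma wz_step_ii : wz_step a k q alpha_ii ratio_ii certL_ii certg_ii.
Proof.
move=> m j; rewrite /wp_weight /alpha_ii /ratio_ii /certL_ii /certg_ii.
rewrite !qpochS -!exprM !expr_double !expr2 !exprS !exprD.
by field; nonzero.
Qed.

Lemma wz_boundary_ii : wz_boundary a k q alpha_ii certL_ii certg_ii.
Proof.
move=> n; rewrite /wp_weight /alpha_ii /certL_ii /certg_ii.
rewrite !qpoch0 !qpochS -!exprM !expr_double !expr2 !exprS !exprD.
by field; nonzero.
Qed.

Lemma wp_pair_ii : WP_Bailey_pair a k q alpha_ii beta_ii.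
Proof.
apply: (wp_pair_of_certificate (c := ratio_ii) (L := certL_ii) (g := certg_ii)).
- by rewrite /alpha_ii !qpoch0 /= !expr0; field; nonzero.
- by rewrite /beta_ii !qpoch0 /= !expr0; field; nonzero.
- move=> n; rewrite /beta_ii /ratio_ii !qpochS -!exprM !expr_double !expr2 !exprS.
  by field; nonzero.
- by rewrite /certg_ii expr0 subrr !(mulr0, mul0r).
- exact: wz_step_ii.
- exact: wz_boundary_ii.
Qed.

Section SquareRoot.

Variable s : F.
Hypotheses (s_sqrt : s ^+ 2 = q) (s_neq0 : s != 0)
  (as_generic : forall n : nat, a * s * q ^+ n != 1).

Lemma one_sub_asqpow_neq0 e : 1 - a * (s * q ^+ e) != 0.
Proof. by rewrite subr_eq0 eq_sym mulrA. Qed.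

Lemma qpoch_asq_neq0 n : qpoch (a * s) q n != 0.
Proof. by apply: qpoch_neq0 => i _; rewrite -mulrA one_sub_asqpow_neq0. Qed.

Ltac nonzero_s :=
  nonzero_with ltac:(first [ exact: s_neq0 | exact: (expf_neq0 _ s_neq0)
                           | exact: one_sub_asqpow_neq0 | exact: qpoch_asq_neq0 ]).

Definition alpha_iii n := s ^- n * (1 - a * q ^+ (2 * n)) * (qpoch a q n * qpoch s q n)
  / ((1 - a) * (qpoch q q n * qpoch (a * s) q n)).
Definition beta_iii n := (qpoch k q n * qpoch (k * s / a) q n)
  / (qpoch q q n * qpoch (a * s) q n) * s ^- n.
Definition ratio_iii n := (1 - k * q ^+ n) * (1 - k * s / a * q ^+ n)
  / ((1 - q ^+ n.+1) * (1 - a * s * q ^+ n)) / s.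
Definition certL_iii n := - (1 - k * q ^+ (n + n).+1) / ((1 - q ^+ n.+1) * (1 - a * s * q ^+ n)).
Definition certg_iii j := s ^- j * (qpoch a q j * qpoch s q j) * (1 - q ^+ j)
  * (1 - a * q ^+ j / s) / ((1 - a) * (qpoch q q j * qpoch (a * s) q j)).

Lemma wz_step_iii : wz_step a k q alpha_iii ratio_iii certL_iii certg_iii.
Proof.
move=> m j; rewrite /wp_weight /alpha_iii /ratio_iii /certL_iii /certg_iii.
rewrite !qpochS !expr_double !exprS !exprD -s_sqrt.
by field; rewrite s_sqrt; nonzero_s.
Qed.

Lemma wz_boundary_iii : wz_boundary a k q alpha_iii certL_iii certg_iii.
Proof.
move=> n; rewrite /wp_weight /alpha_iii /certL_iii /certg_iii.
rewrite !qpoch0 !qpochS !expr_double !exprS !exprD -s_sqrt.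
by field; rewrite s_sqrt; nonzero_s.
Qed.

Lemma wp_pair_iii : WP_Bailey_pair a k q alpha_iii beta_iii.
Proof.
apply: (wp_pair_of_certificate (c := ratio_iii) (L := certL_iii) (g := certg_iii)).
- by rewrite /alpha_iii !qpoch0 /= !expr0; field; nonzero_s.
- by rewrite /beta_iii !qpoch0 /= !expr0; field; nonzero_s.
- move=> n; rewrite /beta_iii /ratio_iii !qpochS !exprS.
  by field; nonzero_s.
- by rewrite /certg_iii expr0 subrr !(mulr0, mul0r).
- exact: wz_step_iii.
- exact: wz_boundary_iii.
Qed.

End SquareRoot.

End ThreePairs.

Theorem mainTheorem15 (F : fieldType) (a k q s : F)
  (ha0 : a != 0) (ha1 : a != 1)
  (hq : forall n : nat, q ^+ n.+1 != 1)
  (haq : forall n : nat, a * q ^+ n.+1 != 1)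
  (hs2 : s ^+ 2 = q) (hs0 : s != 0)
  (has : forall n : nat, a * s * q ^+ n != 1) :
  WP_Bailey_pair a k q
    (fun n => (-1) ^+ n * q ^+ ((n * (n - 1))./2) * (1 - a * q ^+ (2 * n)) * qpoch a q n
              / ((1 - a) * qpoch q q n))
    (fun n => (-1) ^+ n * k ^+ n * q ^+ ((n * (n - 1))./2) * qpoch k q n
              / (a ^+ n * qpoch q q n))
  /\
  WP_Bailey_pair a k q
    (fun n => (-1) ^+ n * a ^- n * (1 - a * q ^+ (2 * n)) * qpoch (a ^+ 2) (q ^+ 2) n
              / ((1 - a) * qpoch (q ^+ 2) (q ^+ 2) n))
    (fun n => (-1) ^+ n * a ^- n * qpoch (k ^+ 2) (q ^+ 2) n / qpoch (q ^+ 2) (q ^+ 2) n)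
  /\
  WP_Bailey_pair a k q
    (fun n => s ^- n * (1 - a * q ^+ (2 * n)) * (qpoch a q n * qpoch s q n)
              / ((1 - a) * (qpoch q q n * qpoch (a * s) q n)))
    (fun n => (qpoch k q n * qpoch (k * s / a) q n) / (qpoch q q n * qpoch (a * s) q n)
              * s ^- n).
Proof.
split; first by apply: wp_pair_i.
split; first by apply: wp_pair_ii.
by apply: wp_pair_iii.
Qed.
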